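(* For every nonnegative integer $n$ and every $0\le k\le n$, \[ B_{n,k}(q)=q^{2nk-n^2}\,B_{n,n-k}(q). \]
   Context: $\mathcal{B}_n$ is the group of signed permutations of $[n]$ (bijections $\pi$ of $\{\pm1,\dots,\pm n\}$ with $\pi(-i)=-\pi(i)$, written $\pi=\pi_1\cdots\pi_n$), integers ordered naturally. Set $\pi_0=0$; $\mathrm{Des}_B(\pi)=\{i\in\{0,\dots,n-1\}:\pi_i>\pi_{i+1}\}$, $\mathrm{des}_B(\pi)=|\mathrm{Des}_B(\pi)|$, $\mathrm{neg}(\pi)=|\{i\in[n]:\pi_i<0\}|$, $\mathrm{fmaj}(\pi)=\sum_{i\in\mathrm{Des}_B(\pi)}2i+\mathrm{neg}(\pi)$. Define $B_{n,k}(q)$ by $\sum_{\pi\in\mathcal{B}_n}t^{\mathrm{des}_B(\pi)}q^{\mathrm{fmaj}(\pi)}=\sum_{k=0}^nB_{n,k}(q)t^k$. *)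

From HB Require Import structures.
From mathcomp Require Import all_boot all_order all_algebra all_fingroup.
Set Implicit Arguments. Unset Strict Implicit. Unset Printing Implicit Defensive.
Import Order.TTheory GRing.Theory Num.Theory.

(* A signed permutation of [n] is encoded by its underlying permutation
   sigma of {0..n-1} together with a sign vector: for i in [n] (1-based),
   pi_i = (-1)^{neg_(i-1)} * (sigma(i-1) + 1).  This is a bijection with B_n
   (pi(-i) = -pi(i) determines pi from its window pi_1 ... pi_n). *)
Definition signed_perm (n : nat) : finType :=
  ('S_n * {ffun 'I_n -> bool})%type.

(* window entry pi_i for i in [n] (1-based); pi_0 = 0 (and 0 beyond n). *)
Definition sp_entry (n : nat) (p : signed_perm n) (i : nat) : int :=
  match i with
  | 0 => 0%R
  | j.+1 =>
      match insub j with
      | Some jj => ((-1) ^+ p.2 jj * (p.1 jj).+1%:Z)%R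
      | None => 0%R
      end
  end.

Definition DesB (n : nat) (p : signed_perm n) : {set 'I_n} :=
  [set i : 'I_n | (sp_entry p i.+1 < sp_entry p i)%R].

Definition desB (n : nat) (p : signed_perm n) : nat := #|DesB p|.

Definition negB (n : nat) (p : signed_perm n) : nat :=
  #|[set i : 'I_n | p.2 i]|.

Definition fmaj (n : nat) (p : signed_perm n) : nat :=
  (\sum_(i in DesB p) 2 * (i : nat) + negB p)%N.

Definition Bnk (n k : nat) : {poly int} :=
  (\sum_(p : signed_perm n | desB p == k) 'X^(fmaj p))%R.

(* The involution p |-> p' with p'_i = c(p_(n+1-i)), where c(u) = u - (n+1)
   for u > 0 and c(u) = u + (n+1) for u < 0, reverses positions while c is
   increasing on each sign class and swaps the two classes.  Comparing
   consecutive entries gives, for 0 < j < n,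
     [p' has a descent at n-j] + [p has a descent at j] + [p_j < 0]
       = 1 + [p_(j+1) < 0],
   while p' has a descent at 0 iff p_n > 0.  Summing these relations gives
   des_B p' = n - des_B p; summing them with weights 2(n-j), the sign terms
   telescope (Abel summation) and give fmaj p' = fmaj p + n^2 - 2n des_B p.
   Reindexing B_{n,n-k} along the involution yields the identity. *)

From mathcomp Require Import all_boot all_order all_algebra all_fingroup.
From mathcomp Require Import zify.
Import GRing.Theory.
Set Implicit Arguments. Unset Strict Implicit. Unset Printing Implicit Defensive.
Arguments sp_entry : simpl never.

Lemma sum_nat_shift (g : nat -> nat) m n : m <= n ->
  \sum_(m <= j < n) g j.+1 + g m = g n + \sum_(m <= j < n) g j.
Proof.
by move=> le_mn; rewrite addnC -big_nat_recl // big_nat_recr //= addnC.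
Qed.

Lemma sum_double_nat n : \sum_(0 <= i < n) 2 * i = n * n.-1.
Proof. by rewrite -big_distrr /= bin2_sum -(mul_bin_diag n 1) bin1. Qed.

Lemma sum_nat_first_rev (F : nat -> nat) n : 0 < n ->
  \sum_(0 <= i < n) F i = F 0 + \sum_(1 <= j < n) F (n - j).
Proof. by move=> n_gt0; rewrite big_ltn // big_nat_rev. Qed.

Lemma sum_set_ord n (P : pred nat) (F : nat -> nat) :
  \sum_(i in [set i : 'I_n | P i]) F i = \sum_(0 <= i < n) F i * P i.
Proof.
rewrite big_mkcond big_mkord; apply: eq_bigr => i _.
by rewrite inE; case: (P i); rewrite ?muln1 ?muln0.
Qed.

Lemma card_set_ord n (P : pred nat) :
  #|[set i : 'I_n | P i]| = \sum_(0 <= i < n) P i.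
Proof.
by rewrite -sum1_card (@sum_set_ord n P (fun=> 1)); apply: eq_bigr => i _; rewrite mul1n.
Qed.

Definition negcompl (n : nat) (u : int) : int :=
  if (0 < u)%R then (u - n.+1%:Z)%R else (u + n.+1%:Z)%R.

Lemma negcompl_lt0 (n : nat) (u : int) :
  (0 < `|u| <= n)%R -> (negcompl n u < 0)%R = (0 < u)%R.
Proof. by rewrite /negcompl; case: ifP; lia. Qed.

Lemma negcompl_lt (n : nat) (u v : int) :
  (0 < `|u| <= n)%R -> (0 < `|v| <= n)%R -> u != v ->
  (negcompl n u < negcompl n v)%R + (v < u)%R + (u < 0)%R = 1 + (v < 0)%R.
Proof. by rewrite /negcompl; do 2 case: ifP; lia. Qed.

Definition rev_perm n : 'S_n := perm (@rev_ord_inj n).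

Definition sp_dual n (p : signed_perm n) : signed_perm n :=
  ((rev_perm n * p.1 * rev_perm n)%g, [ffun i => ~~ p.2 (rev_ord i)]).

Lemma sp_dualK n : involutive (@sp_dual n).
Proof.
have rev_permK : (rev_perm n * rev_perm n = 1)%g.
  by apply/permP => i; rewrite permM !permE /= rev_ordK.
case=> s f; congr (_, _).
  by rewrite /= !mulgA rev_permK mul1g -mulgA rev_permK mulg1.
by apply/ffunP => i; rewrite !ffunE rev_ordK negbK.
Qed.

Section Entries.

Variables (n : nat) (p : signed_perm n).
Local Notation x := (sp_entry p).

Lemma sp_entry0 : x 0 = 0%R.
Proof. by []. Qed.

Lemma sp_entry_ord (i : 'I_n) : x i.+1 = ((-1) ^+ p.2 i * (p.1 i).+1%:Z)%R.
Proof. by rewrite /sp_entry valK. Qed.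

Lemma sp_entry_lt0 (i : 'I_n) : (x i.+1 < 0)%R = p.2 i.
Proof. by rewrite sp_entry_ord; case: (p.2 i); rewrite ?expr1 ?expr0; lia. Qed.

Lemma norm_sp_entry (i : 'I_n) : (`|x i.+1| = (p.1 i).+1%:Z)%R.
Proof. by rewrite sp_entry_ord; case: (p.2 i); rewrite ?expr1 ?expr0; lia. Qed.

Lemma sp_entry_range j : 0 < j <= n -> (0 < `|x j| <= n)%R.
Proof.
case: j => // j /= lt_jn; rewrite (norm_sp_entry (Ordinal lt_jn)).
by have := ltn_ord (p.1 (Ordinal lt_jn)); lia.
Qed.

Lemma sp_entry_neqS j : 0 < j < n -> x j != x j.+1.
Proof.
case: j => // j /= lt_jn; have lt_jn' := ltnW lt_jn.
apply/negP => /eqP /(congr1 Num.norm).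
rewrite (norm_sp_entry (Ordinal lt_jn')) (norm_sp_entry (Ordinal lt_jn)).
by move=> /eqP; rewrite eqz_nat eqSS => /eqP /ord_inj /perm_inj /(congr1 val) /=; lia.
Qed.

End Entries.

Lemma sp_entry_dual n (p : signed_perm n) j :
  j < n -> sp_entry (sp_dual p) j.+1 = negcompl n (sp_entry p (n - j)).
Proof.
move=> lt_jn; have -> : n - j = (rev_ord (Ordinal lt_jn)).+1 by rewrite /= subnSK.
rewrite (sp_entry_ord (sp_dual p) (Ordinal lt_jn)) sp_entry_ord /= ffunE !permM !permE /=.
by have := ltn_ord (p.1 (rev_ord (Ordinal lt_jn))); rewrite /negcompl;
  case: (p.2 _) => /=; rewrite ?expr1 ?expr0; lia.
Qed.

Section SumForms.

Variables (n : nat) (p : signed_perm n).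
Local Notation x := (sp_entry p).

Lemma desB_sum : desB p = \sum_(0 <= j < n) (x j.+1 < x j)%R.
Proof. exact: card_set_ord. Qed.

Lemma negB_sum : negB p = \sum_(0 <= j < n) (x j.+1 < 0)%R.
Proof.
by rewrite /negB -card_set_ord; apply: eq_card => i; rewrite !inE sp_entry_lt0.
Qed.

Lemma fmaj_sum : fmaj p = \sum_(0 <= j < n) 2 * j * (x j.+1 < x j)%R + negB p.
Proof. by rewrite /fmaj /DesB (@sum_set_ord n (fun j => x j.+1 < x j)%R). Qed.

End SumForms.

Lemma negB_dual n (p : signed_perm n) : negB (sp_dual p) + negB p = n.
Proof.
rewrite /negB; have -> : [set i | (sp_dual p).2 i] = (@rev_ord n) @^-1: ~: [set i | p.2 i].
  by apply/setP => i; rewrite !inE ffunE.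
by rewrite card_preimset; last exact: rev_ord_inj; rewrite addnC cardsC card_ord.
Qed.

Section Dual.

Variables (n : nat) (p : signed_perm n).
Local Notation x := (sp_entry p).
Local Notation y := (sp_entry (sp_dual p)).

Lemma dual_des_first : 0 < n -> (y 1 < 0)%R + (x n < 0)%R = 1.
Proof.
move=> n_gt0; rewrite (sp_entry_dual p n_gt0) subn0.
have x_range : (0 < `|x n| <= n)%R by apply: sp_entry_range; rewrite n_gt0 /=.
by rewrite negcompl_lt0 //; lia.
Qed.

Lemma dual_des_inner j : 0 < j < n ->
  (y (n - j).+1 < y (n - j))%R + (x j.+1 < x j)%R + (x j < 0)%R = 1 + (x j.+1 < 0)%R.
Proof.
move=> /andP[j_gt0 lt_jn].
have y_hi : y (n - j).+1 = negcompl n (x j).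
  by rewrite sp_entry_dual ?subKn //; lia.
have y_lo : y (n - j) = negcompl n (x j.+1).
  by rewrite -[n - j](@subnSK j n) // sp_entry_dual ?subKn //; lia.
rewrite y_hi y_lo negcompl_lt //; [apply: sp_entry_range.. | apply: sp_entry_neqS]; lia.
Qed.

Lemma sum_dual_des_inner (w : nat -> nat) :
  \sum_(1 <= j < n) w j * (y (n - j).+1 < y (n - j))%R
  + \sum_(1 <= j < n) w j * (x j.+1 < x j)%R + \sum_(1 <= j < n) w j * (x j < 0)%R
  = \sum_(1 <= j < n) w j + \sum_(1 <= j < n) w j * (x j.+1 < 0)%R.
Proof.
rewrite -!big_split; apply: eq_big_nat => j j_range /=.
by rewrite -!mulnDr dual_des_inner // mulnDr muln1.
Qed.

Lemma desB_dual : desB (sp_dual p) + desB p = n.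
Proof.
have [n0 | n_gt0] := posnP n; first by rewrite !desB_sum !big_geq ?n0.
rewrite [desB p]desB_sum big_ltn // desB_sum (sum_nat_first_rev _ n_gt0) !sp_entry0.
have := sum_dual_des_inner (fun=> 1).
rewrite sum_nat_const_nat !(eq_bigr _ (fun j _ => mul1n _)).
have := sum_nat_shift (fun j => (x j < 0)%R) n_gt0.
have := dual_des_first n_gt0.
lia.
Qed.

Lemma fmaj_dual : fmaj (sp_dual p) + 2 * n * desB p = fmaj p + n ^ 2.
Proof.
have [n0 | n_gt0] := posnP n.
  by rewrite !fmaj_sum desB_sum !negB_sum !big_geq ?n0.
rewrite !fmaj_sum desB_sum (sum_nat_first_rev _ n_gt0) !(big_ltn n_gt0) !sp_entry0.
rewrite !muln0 !mul0n !add0n.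
have := sum_dual_des_inner (fun j => 2 * (n - j)).
have des_weights : \sum_(1 <= j < n) 2 * (n - j) * (x j.+1 < x j)%R
    + \sum_(1 <= j < n) 2 * j * (x j.+1 < x j)%R
    = 2 * n * \sum_(1 <= j < n) (x j.+1 < x j)%R.
  rewrite big_distrr -big_split; apply: eq_big_nat => j /andP[_ lt_jn] /=.
  by rewrite -mulnDl; congr (_ * _); lia.
have neg_weights : \sum_(1 <= j < n) 2 * (n - j) * (x j.+1 < 0)%R
    = \sum_(1 <= j < n) 2 * (n - j.+1) * (x j.+1 < 0)%R
      + 2 * \sum_(1 <= j < n) (x j.+1 < 0)%R.
  rewrite big_distrr -big_split; apply: eq_big_nat => j /andP[_ lt_jn] /=.
  by rewrite -mulnDl; congr (_ * _); lia.
have := sum_nat_shift (fun j => 2 * (n - j) * (x j < 0)%R) n_gt0.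
rewrite subnn muln0 mul0n add0n /=.
have := sum_double_nat n; rewrite (sum_nat_first_rev _ n_gt0) muln0 add0n.
have := negB_dual p; rewrite [negB p]negB_sum (big_ltn n_gt0).
nia.
Qed.

End Dual.

Theorem proposition2p3 (n k : nat) :
  (k <= n)%N ->
  ('X^(n ^ 2) * Bnk n k = 'X^(2 * n * k) * Bnk n (n - k))%R.
Proof.
move=> le_kn; rewrite /Bnk !mulr_sumr [RHS](reindex_inj (inv_inj (@sp_dualK n))) /=.
apply: eq_big => p; first by apply/eqP/eqP; have := desB_dual p; lia.
move=> /eqP des_p; rewrite -!exprD; congr ('X^_)%R.
by have := fmaj_dual p; rewrite des_p; lia.
Qed.
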